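(* Fix two distinct decimal digits $d_1 \neq d_2$ in $\{0,1,\dots,9\}$. For integers $i \ge 1$ and $k_1, k_2 \ge 0$, let $S(i,k_1,k_2)$ be the set of positive integers whose base-10 representation has exactly $i$ digits (no leading zeros) and contains exactly $k_1$ occurrences of the digit $d_1$ and exactly $k_2$ occurrences of the digit $d_2$; set $S(i,k_1,k_2)=\emptyset$ if $k_1<0$ or $k_2<0$. For integers $j \ge 1$ define $$t(i,j,k_1,k_2) = \sum_{x \in S(i,k_1,k_2)} \frac{1}{x^j}$$ (an empty sum being $0$). Then for all integers $i\ge 1$, $j \ge 1$, $k_1,k_2 \ge 0$: $$t(i+1,j,k_1,k_2) = \sum_{n=0}^{\infty} (-1)^n \binom{j+n-1}{n} \frac{1}{10^{j+n}} \Big[ d_1^{\,n}\, t(i,j+n,k_1-1,k_2) + d_2^{\,n}\, t(i,j+n,k_1,k_2-1) + \Big(\sum_{\substack{d\in\{0,\dots,9\}\\ d\ne d_1,\, d\ne d_2}} d^{\,n}\Big) t(i,j+n,k_1,k_2) \Big],$$ where $0^0$ is interpreted as $1$, and the series on the right converges.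
   Context: All integers are written in base 10. The three terms in the bracket correspond to the decomposition $S(i+1,k_1,k_2) = \{10x+d_1 : x\in S(i,k_1-1,k_2)\} \cup \{10x+d_2 : x \in S(i,k_1,k_2-1)\} \cup \{10x+d : x\in S(i,k_1,k_2),\ d\in\{0,\dots,9\}\setminus\{d_1,d_2\}\}$. *)

From Stdlib Require Import Reals ZArith Arith List Bool.
From Coquelicot Require Import Coquelicot.
Open Scope R_scope.

Definition digit (x m : nat) : nat := ((x / 10 ^ m) mod 10)%nat.

Definition count_digit (i x d : nat) : nat :=
  length (filter (fun m => Nat.eqb (digit x m) d) (seq 0 i)).

(* membership in S(i,k1,k2): exactly i digits (10^(i-1) <= x < 10^i),
   exactly k1 digits equal to d1 and k2 digits equal to d2.
   k1, k2 are integers; negative values give the empty set. *)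
Definition inS (d1 d2 i : nat) (k1 k2 : Z) (x : nat) : bool :=
  (Nat.leb (10 ^ (i - 1)) x) && (Nat.ltb x (10 ^ i)) &&
  Z.eqb (Z.of_nat (count_digit i x d1)) k1 &&
  Z.eqb (Z.of_nat (count_digit i x d2)) k2.

Definition S_list (d1 d2 i : nat) (k1 k2 : Z) : list nat :=
  filter (inS d1 d2 i k1 k2) (seq (10 ^ (i - 1)) (10 ^ i - 10 ^ (i - 1))).

Definition t (d1 d2 i j : nat) (k1 k2 : Z) : R :=
  fold_right Rplus 0 (map (fun x => / (INR x ^ j)) (S_list d1 d2 i k1 k2)).

Definition other_digit_powsum (d1 d2 n : nat) : R :=
  fold_right Rplus 0
    (map (fun d => INR d ^ n)
       (filter (fun d => negb (Nat.eqb d d1) && negb (Nat.eqb d d2)) (seq 0 10))).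

From Stdlib Require Import Reals ZArith Arith List Bool Lia Lra.
From Coquelicot Require Import Coquelicot.
Open Scope R_scope.

(* Every (i+1)-digit number is uniquely 10 y + d with y an i-digit number and d a digit, and
   the digit counts of 10 y + d are those of y plus the contribution of d; this splits
   S(i+1,k1,k2) into the three families of the recurrence.  Each summand is expanded by the
   negative binomial series
     1 / (10 y + d)^j = sum_n (-1)^n C(j+n-1, n) d^n / (10 y)^(j+n),
   which converges because d < 10 y, and the finitely many series are added termwise. *)

Lemma C_ge0 (n m : nat) : 0 <= Binomial.C n m.
Proof.
  unfold Binomial.C; apply Rmult_le_pos; [apply pos_INR |].
  left; apply Rinv_0_lt_compat, Rmult_lt_0_compat; apply lt_0_INR, lt_O_fact.
Qed.

Lemma sum_f_R0_C_diag (k n : nat) :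
  sum_f_R0 (fun m => Binomial.C (k + m) m) n = Binomial.C (S k + n) n.
Proof.
  induction n as [|n IH]; simpl sum_f_R0.
  - rewrite !Nat.add_0_r, !C_n_0; reflexivity.
  - rewrite IH; replace (k + S n)%nat with (S k + n)%nat by lia.
    replace (S k + S n)%nat with (S (S k + n)) by lia.
    apply pascal; lia.
Qed.

Lemma is_series_negative_binomial (k : nat) (z : R) : Rabs z < 1 ->
  is_series (fun n => Binomial.C (k + n) n * z ^ n) (/ (1 - z) ^ S k).
Proof.
  revert z; induction k as [|k IH]; intros z Hz.
  - rewrite pow_1; apply (is_series_ext (fun n => z ^ n)); [| exact (is_series_geom z Hz)].
    intro n; simpl; rewrite C_n_n; ring.
  - assert (Hz_abs : Rabs (Rabs z) < 1) by now rewrite Rabs_Rabsolu.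
    assert (Habs_C : ex_series (fun n => Rabs (Binomial.C (k + n) n * z ^ n))).
    { eexists; apply (is_series_ext (fun n => Binomial.C (k + n) n * Rabs z ^ n));
        [| exact (IH _ Hz_abs)].
      intro n; rewrite Rabs_mult, RPow_abs, (Rabs_pos_eq _ (C_ge0 _ _)); reflexivity. }
    assert (Habs_geom : ex_series (fun n => Rabs (z ^ n))).
    { eexists; apply (is_series_ext (fun n => Rabs z ^ n)); [| exact (is_series_geom _ Hz_abs)].
      intro n; apply RPow_abs. }
    assert (Hz1 : 1 - z <> 0) by (apply Rabs_def2 in Hz; lra).
    replace (/ (1 - z) ^ S (S k)) with (/ (1 - z) ^ S k * / (1 - z))
      by (simpl; field; auto using pow_nonzero).
    (* Cauchy product with the geometric series: its coefficients are hockey-stick sums. *)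
    eapply is_series_ext;
      [| exact (is_series_mult _ _ _ _ (IH z Hz) (is_series_geom z Hz) Habs_C Habs_geom)].
    intro n; simpl.
    rewrite (sum_eq _ (fun m => Binomial.C (k + m) m * z ^ n)).
    + rewrite <- scal_sum, sum_f_R0_C_diag; simpl; ring.
    + intros m Hm; rewrite Rmult_assoc, <- pow_add; do 2 f_equal; lia.
Qed.

Lemma is_series_inv_pow_add (k : nat) (a b : R) : Rabs b < Rabs a ->
  is_series (fun n => Binomial.C (k + n) n * (- b) ^ n / a ^ (S k + n)) (/ (a + b) ^ S k).
Proof.
  intros Hba.
  assert (Ha : a <> 0) by (intros ->; rewrite Rabs_R0 in Hba; pose proof (Rabs_pos b); lra).
  set (z := - b / a).
  assert (Hz : Rabs z < 1).
  { unfold z, Rdiv; rewrite Rabs_mult, Rabs_Ropp, Rabs_inv.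
    apply (Rmult_lt_reg_r (Rabs a)); [pose proof (Rabs_pos b); lra |].
    rewrite Rmult_assoc, Rinv_l, Rmult_1_r, Rmult_1_l; [lra | now apply Rabs_no_R0]. }
  assert (Hsum : / (a + b) ^ S k = / a ^ S k * / (1 - z) ^ S k).
  { rewrite <- Rinv_mult, <- Rpow_mult_distr.
    replace (a * (1 - z)) with (a + b); [reflexivity | unfold z; field; exact Ha]. }
  assert (Hterm : forall n, / a ^ S k * (Binomial.C (k + n) n * z ^ n)
                            = Binomial.C (k + n) n * (- b) ^ n / a ^ (S k + n)).
  { intro n; unfold z, Rdiv; rewrite Rpow_mult_distr, pow_inv, pow_add.
    field; split; apply pow_nonzero; exact Ha. }
  rewrite Hsum; apply (is_series_ext _ _ _ Hterm).
  exact (is_series_scal_l _ _ _ (is_series_negative_binomial k z Hz)).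
Qed.

Lemma is_series_inv_pow_mul10_add (y d j : nat) : (1 <= y)%nat -> (d < 10)%nat -> (1 <= j)%nat ->
  is_series
    (fun n => (-1) ^ n * Binomial.C (j + n - 1) n / 10 ^ (j + n) * (INR d ^ n * / INR y ^ (j + n)))
    (/ INR (10 * y + d) ^ j).
Proof.
  intros Hy Hd Hj; destruct j as [|k]; [lia |].
  assert (HY : 1 <= INR y) by exact (le_INR 1 y Hy).
  assert (HD : INR d <= 9) by (replace 9 with (INR 9) by (simpl; ring); apply le_INR; lia).
  assert (Hdy : Rabs (INR d) < Rabs (10 * INR y)).
  { rewrite !Rabs_pos_eq; pose proof (pos_INR d); lra. }
  assert (Hterm : forall n,
    Binomial.C (k + n) n * (- INR d) ^ n / (10 * INR y) ^ (S k + n)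
    = (-1) ^ n * Binomial.C (S k + n - 1) n / 10 ^ (S k + n) * (INR d ^ n * / INR y ^ (S k + n))).
  { intro n; replace (S k + n - 1)%nat with (k + n)%nat by lia.
    replace (- INR d) with (-1 * INR d) by ring; rewrite !Rpow_mult_distr.
    field; split; apply pow_nonzero; lra. }
  replace (INR (10 * y + d)) with (10 * INR y + INR d)
    by (rewrite plus_INR, mult_INR; simpl; ring).
  exact (is_series_ext _ _ _ Hterm (is_series_inv_pow_add k _ _ Hdy)).
Qed.

Definition sumR {A : Type} (l : list A) (f : A -> R) : R := fold_right Rplus 0 (map f l).

Lemma sumR_filter {A : Type} (P : A -> bool) (l : list A) (f : A -> R) :
  sumR (filter P l) f = sumR l (fun x => if P x then f x else 0).
Proof.
  induction l as [|x l IH]; unfold sumR in *; simpl; [reflexivity |].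
  destruct (P x); simpl; rewrite IH; ring.
Qed.

Lemma sumR_app {A : Type} (l1 l2 : list A) (f : A -> R) :
  sumR (l1 ++ l2) f = sumR l1 f + sumR l2 f.
Proof. induction l1 as [|x l1 IH]; unfold sumR in *; simpl; [ring | rewrite IH; ring]. Qed.

Lemma sumR_flat_map {A B : Type} (g : A -> list B) (l : list A) (f : B -> R) :
  sumR (flat_map g l) f = sumR l (fun x => sumR (g x) f).
Proof. induction l as [|x l IH]; simpl; [reflexivity |]; rewrite sumR_app, IH; reflexivity. Qed.

Lemma sumR_map {A B : Type} (h : A -> B) (l : list A) (f : B -> R) :
  sumR (map h l) f = sumR l (fun x => f (h x)).
Proof. unfold sumR; rewrite map_map; reflexivity. Qed.

Lemma sumR_ext_in {A : Type} (l : list A) (f g : A -> R) :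
  (forall x, In x l -> f x = g x) -> sumR l f = sumR l g.
Proof. intros H; unfold sumR; f_equal; apply map_ext_in, H. Qed.

Lemma sumR_plus {A : Type} (l : list A) (f g : A -> R) :
  sumR l (fun x => f x + g x) = sumR l f + sumR l g.
Proof. induction l as [|x l IH]; unfold sumR in *; simpl; [ring | rewrite IH; ring]. Qed.

Lemma sumR_scal {A : Type} (c : R) (l : list A) (f : A -> R) :
  sumR l (fun x => c * f x) = c * sumR l f.
Proof. induction l as [|x l IH]; unfold sumR in *; simpl; [ring | rewrite IH; ring]. Qed.

Lemma sumR_if {A : Type} (b : bool) (l : list A) (f : A -> R) :
  sumR l (fun x => if b then f x else 0) = if b then sumR l f else 0.
Proof.
  destruct b; [reflexivity |].
  induction l as [|x l IH]; unfold sumR in *; simpl; [reflexivity | rewrite IH; ring].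
Qed.

Lemma sumR_remove (a : nat) (l : list nat) (f : nat -> R) : NoDup l -> In a l ->
  sumR l f = f a + sumR (filter (fun x => negb (x =? a)) l) f.
Proof.
  induction l as [|x l IH]; intros Hnd Ha; [destruct Ha |].
  inversion Hnd as [|? ? Hx Hl]; subst.
  destruct (Nat.eq_dec x a) as [-> | Hxa].
  - simpl; rewrite Nat.eqb_refl; simpl.
    rewrite forallb_filter_id; [reflexivity |].
    apply forallb_forall; intros y Hy.
    apply negb_true_iff, Nat.eqb_neq; intros ->; contradiction.
  - destruct Ha as [-> | Ha]; [contradiction |].
    apply Nat.eqb_neq in Hxa; simpl; rewrite Hxa; unfold sumR in *; simpl.
    rewrite (IH Hl Ha); ring.
Qed.

Lemma filter_filter {A : Type} (f g : A -> bool) (l : list A) :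
  filter f (filter g l) = filter (fun x => g x && f x) l.
Proof.
  induction l as [|x l IH]; simpl; [reflexivity |].
  destruct (g x); simpl; [destruct (f x) |]; rewrite IH; reflexivity.
Qed.

Lemma is_series_0 : is_series (fun _ : nat => 0) 0.
Proof.
  apply (filterlim_ext (fun _ => 0)); [| apply filterlim_const].
  intro n; rewrite sum_n_const; simpl; ring.
Qed.

Lemma is_series_sumR {A : Type} (l : list A) (a : A -> nat -> R) (s : A -> R) :
  (forall x, In x l -> is_series (a x) (s x)) ->
  is_series (fun n => sumR l (fun x => a x n)) (sumR l s).
Proof.
  induction l as [|x l IH]; intros H.
  - apply is_series_0.
  - apply (is_series_plus (a x) (fun n => sumR l (fun x => a x n))).
    + apply H; left; reflexivity.
    + apply IH; intros; apply H; right; assumption.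
Qed.

Lemma digit_mul10_add_0 (y d : nat) : (d < 10)%nat -> digit (10 * y + d) 0 = d.
Proof.
  intros Hd; unfold digit.
  rewrite Nat.pow_0_r, Nat.div_1_r, Nat.add_comm, Nat.mul_comm, Nat.Div0.mod_add.
  apply Nat.mod_small; exact Hd.
Qed.

Lemma digit_mul10_add_S (y d m : nat) : (d < 10)%nat -> digit (10 * y + d) (S m) = digit y m.
Proof.
  intros Hd; unfold digit.
  rewrite Nat.pow_succ_r', <- Nat.Div0.div_div.
  replace ((10 * y + d) / 10)%nat with y; [reflexivity |].
  rewrite Nat.add_comm, Nat.mul_comm, Nat.div_add, Nat.div_small by lia; reflexivity.
Qed.

Lemma count_digit_mul10_add (i y d c : nat) : (d < 10)%nat ->
  count_digit (S i) (10 * y + d) c = (Nat.b2n (d =? c) + count_digit i y c)%nat.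
Proof.
  intros Hd; unfold count_digit.
  change (seq 0 (S i)) with (0%nat :: seq 1 i); rewrite <- seq_shift; cbn [filter].
  rewrite digit_mul10_add_0, filter_map_swap by exact Hd.
  rewrite (filter_ext _ (fun m => digit y m =? c))
    by (intro m; rewrite digit_mul10_add_S by exact Hd; reflexivity).
  destruct (d =? c); simpl; rewrite length_map; reflexivity.
Qed.

Lemma inS_mul10_add (d1 d2 i : nat) (K1 K2 : Z) (y d : nat) :
  (1 <= i)%nat -> (10 ^ (i - 1) <= y < 10 ^ i)%nat -> (d < 10)%nat ->
  inS d1 d2 (i + 1) K1 K2 (10 * y + d) =
  inS d1 d2 i (K1 - Z.of_nat (Nat.b2n (d =? d1))) (K2 - Z.of_nat (Nat.b2n (d =? d2))) y.
Proof.
  intros Hi Hy Hd; unfold inS.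
  rewrite Nat.add_sub, Nat.add_1_r, !count_digit_mul10_add by exact Hd.
  assert (Hshift : forall b x K, (Z.of_nat (b + x) =? K)%Z = (Z.of_nat x =? K - Z.of_nat b)%Z)
    by (intros b x K; destruct (Z.eqb_spec (Z.of_nat (b + x)) K),
                               (Z.eqb_spec (Z.of_nat x) (K - Z.of_nat b)); lia).
  assert (Hpow : (10 ^ i = 10 * 10 ^ (i - 1))%nat)
    by (rewrite <- Nat.pow_succ_r'; f_equal; lia).
  rewrite !Hshift, Nat.pow_succ_r'.
  replace (10 ^ i <=? 10 * y + d)%nat with true by (symmetry; apply Nat.leb_le; lia).
  replace (10 * y + d <? 10 * 10 ^ i)%nat with true by (symmetry; apply Nat.ltb_lt; lia).
  replace (10 ^ (i - 1) <=? y)%nat with true by (symmetry; apply Nat.leb_le; lia).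
  replace (y <? 10 ^ i)%nat with true by (symmetry; apply Nat.ltb_lt; lia).
  reflexivity.
Qed.

Definition range_ndigits (i : nat) : list nat := seq (10 ^ (i - 1)) (10 ^ i - 10 ^ (i - 1)).

Lemma in_range_ndigits (i y : nat) :
  In y (range_ndigits i) <-> (10 ^ (i - 1) <= y < 10 ^ i)%nat.
Proof.
  unfold range_ndigits; rewrite in_seq.
  pose proof (Nat.pow_le_mono_r 10 (i - 1) i ltac:(lia) ltac:(lia)); lia.
Qed.

Lemma map_add_seq (s k n : nat) : map (Nat.add s) (seq k n) = seq (s + k) n.
Proof.
  revert k; induction n as [|n IH]; intros k; simpl; [reflexivity |].
  rewrite IH, Nat.add_succ_r; reflexivity.
Qed.

Lemma seq_mul10 (a N : nat) :
  seq (10 * a) (10 * N) = flat_map (fun y => map (Nat.add (10 * y)) (seq 0 10)) (seq a N).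
Proof.
  revert a; induction N as [|N IH]; intros a; [rewrite Nat.mul_0_r; reflexivity |].
  replace (10 * S N)%nat with (10 + 10 * N)%nat by lia.
  rewrite seq_app; replace (10 * a + 10)%nat with (10 * S a)%nat by lia.
  change (seq a (S N)) with (a :: seq (S a) N); cbn [flat_map].
  rewrite IH, map_add_seq, Nat.add_0_r; reflexivity.
Qed.

Lemma range_ndigits_succ (i : nat) : (1 <= i)%nat ->
  range_ndigits (i + 1) = flat_map (fun y => map (Nat.add (10 * y)) (seq 0 10)) (range_ndigits i).
Proof.
  intros Hi; unfold range_ndigits; rewrite Nat.add_sub, <- seq_mul10.
  assert (Hpow : (10 ^ i = 10 * 10 ^ (i - 1))%nat)
    by (rewrite <- Nat.pow_succ_r'; f_equal; lia).
  rewrite Nat.pow_add_r, Nat.pow_1_r; f_equal; lia.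
Qed.

Lemma t_sumR (d1 d2 i j : nat) (K1 K2 : Z) :
  t d1 d2 i j K1 K2 =
  sumR (range_ndigits i) (fun y => if inS d1 d2 i K1 K2 y then / INR y ^ j else 0).
Proof. apply sumR_filter. Qed.

Lemma t_succ_sumR (d1 d2 i j : nat) (K1 K2 : Z) : (1 <= i)%nat ->
  t d1 d2 (i + 1) j K1 K2 =
  sumR (range_ndigits i) (fun y => sumR (seq 0 10) (fun d =>
    if inS d1 d2 (i + 1) K1 K2 (10 * y + d) then / INR (10 * y + d) ^ j else 0)).
Proof.
  intros Hi; rewrite t_sumR, range_ndigits_succ, sumR_flat_map by exact Hi.
  apply sumR_ext_in; intros y _; apply sumR_map.
Qed.

Definition other_digits (d1 d2 : nat) : list nat :=
  filter (fun d => negb (d =? d1) && negb (d =? d2)) (seq 0 10).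

Lemma sumR_digits (d1 d2 : nat) (g : nat -> R) : (d1 < 10)%nat -> (d2 < 10)%nat -> d1 <> d2 ->
  sumR (seq 0 10) g = g d1 + g d2 + sumR (other_digits d1 d2) g.
Proof.
  intros H1 H2 H12.
  assert (Hnd := seq_NoDup 10 0).
  rewrite (sumR_remove d1) by (try apply in_seq; auto; lia).
  rewrite (sumR_remove d2 (filter _ _)).
  - unfold other_digits; rewrite filter_filter; ring.
  - apply NoDup_filter, Hnd.
  - apply filter_In; split; [apply in_seq; lia |].
    apply negb_true_iff, Nat.eqb_neq; auto.
Qed.

Lemma sumR_digits_inS_mul10_add (d1 d2 i : nat) (K1 K2 : Z) (y : nat) (g : nat -> R) :
  (d1 < 10)%nat -> (d2 < 10)%nat -> d1 <> d2 ->
  (1 <= i)%nat -> (10 ^ (i - 1) <= y < 10 ^ i)%nat ->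
  sumR (seq 0 10) (fun d => if inS d1 d2 (i + 1) K1 K2 (10 * y + d) then g d else 0) =
  (if inS d1 d2 i (K1 - 1) K2 y then g d1 else 0)
  + (if inS d1 d2 i K1 (K2 - 1) y then g d2 else 0)
  + (if inS d1 d2 i K1 K2 y then sumR (other_digits d1 d2) g else 0).
Proof.
  intros H1 H2 H12 Hi Hy.
  rewrite (sumR_digits d1 d2), !inS_mul10_add by assumption.
  rewrite !Nat.eqb_refl, (proj2 (Nat.eqb_neq d1 d2) H12),
    (proj2 (Nat.eqb_neq d2 d1) (not_eq_sym H12)); cbn [Nat.b2n Z.of_nat].
  rewrite !Z.sub_0_r, <- sumR_if; f_equal.
  apply sumR_ext_in; intros d Hd.
  apply filter_In in Hd as [Hd Hb]; apply in_seq in Hd.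
  apply andb_prop in Hb as [Hb1 Hb2]; apply negb_true_iff in Hb1, Hb2.
  rewrite inS_mul10_add, Hb1, Hb2 by (assumption || lia); cbn [Nat.b2n Z.of_nat].
  rewrite !Z.sub_0_r; reflexivity.
Qed.

Lemma other_digit_powsum_sumR (d1 d2 n : nat) :
  other_digit_powsum d1 d2 n = sumR (other_digits d1 d2) (fun d => INR d ^ n).
Proof. reflexivity. Qed.

Lemma sumR_S_succ_digit_pow (d1 d2 i n m : nat) (K1 K2 : Z) (c : R) :
  (d1 < 10)%nat -> (d2 < 10)%nat -> d1 <> d2 -> (1 <= i)%nat ->
  sumR (range_ndigits i) (fun y => sumR (seq 0 10) (fun d =>
    if inS d1 d2 (i + 1) K1 K2 (10 * y + d) then c * (INR d ^ n * / INR y ^ m) else 0))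
  = c * (INR d1 ^ n * t d1 d2 i m (K1 - 1) K2
         + INR d2 ^ n * t d1 d2 i m K1 (K2 - 1)
         + other_digit_powsum d1 d2 n * t d1 d2 i m K1 K2).
Proof.
  intros Hd1 Hd2 Hne Hi.
  rewrite !t_sumR, <- !sumR_scal, <- !sumR_plus, <- sumR_scal.
  apply sumR_ext_in; intros y Hy; apply in_range_ndigits in Hy.
  rewrite sumR_digits_inS_mul10_add by assumption.
  rewrite (sumR_ext_in _ _ (fun d => c * / INR y ^ m * INR d ^ n)) by (intros; ring).
  rewrite sumR_scal, <- other_digit_powsum_sumR.
  destruct (inS d1 d2 i (K1 - 1) K2 y), (inS d1 d2 i K1 (K2 - 1) y), (inS d1 d2 i K1 K2 y);
    ring.
Qed.

Theorem mainTheorem1 :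
  forall (d1 d2 i j k1 k2 : nat),
    (d1 < 10)%nat -> (d2 < 10)%nat -> d1 <> d2 ->
    (1 <= i)%nat -> (1 <= j)%nat ->
    is_series
      (fun n : nat =>
         (-1) ^ n * Binomial.C (j + n - 1) n / 10 ^ (j + n) *
         (INR d1 ^ n * t d1 d2 i (j + n) (Z.of_nat k1 - 1) (Z.of_nat k2)
          + INR d2 ^ n * t d1 d2 i (j + n) (Z.of_nat k1) (Z.of_nat k2 - 1)
          + other_digit_powsum d1 d2 n * t d1 d2 i (j + n) (Z.of_nat k1) (Z.of_nat k2)))
      (t d1 d2 (i + 1) j (Z.of_nat k1) (Z.of_nat k2)).
Proof.
  intros d1 d2 i j k1 k2 Hd1 Hd2 Hne Hi Hj.
  rewrite t_succ_sumR by exact Hi.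
  eapply is_series_ext; [intro n; apply sumR_S_succ_digit_pow; assumption |].
  apply is_series_sumR; intros y Hy; apply in_range_ndigits in Hy.
  apply is_series_sumR; intros d Hd; apply in_seq in Hd.
  destruct (inS d1 d2 (i + 1) (Z.of_nat k1) (Z.of_nat k2) (10 * y + d)); [| apply is_series_0].
  pose proof (Nat.pow_nonzero 10 (i - 1)); apply is_series_inv_pow_mul10_add; lia.
Qed.
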